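(* For all integers $m \geq 0$ and $n \geq 1$, \[ \sum_{k=0}^{n-1}\binom{m+k}{m}\binom{-n}{k}\binom{-n}{n-1-k} = \sum_{k=0}^{m}\binom{m}{k}\binom{-n}{k}\binom{-2n-k}{n-1-k}. \]
   Context: For a complex number $\alpha$ and an integer $k \geq 0$, $\binom{\alpha}{k} = \frac{\alpha(\alpha-1)\cdots(\alpha-k+1)}{k!}$ (equal to $1$ for $k=0$), and $\binom{\alpha}{k} = 0$ for integers $k < 0$. *)

From mathcomp Require Import all_boot all_order all_algebra.
Set Implicit Arguments. Unset Strict Implicit. Unset Printing Implicit Defensive.
Import Order.TTheory GRing.Theory Num.Theory.
Local Open Scope ring_scope.

Definition gbinom (a : rat) (k : int) : rat :=
  match k with
  | Posz k' => (\prod_(i < k') (a - i%:R)) / (k'`!)%:R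
  | Negz _ => 0
  end.

From mathcomp Require Import all_boot all_order all_algebra.
From mathcomp Require Import zify ring.
Import Order.TTheory GRing.Theory Num.Theory.

(* Write n = N + 1.  Upper negation, binom(-x, k) = (-1)^k binom(x + k - 1, k),
   turns the three negative binomials into (-1)^k C(N + k, N),
   (-1)^(N - k) C(N + (N - k), N) and (-1)^(N - k) C(3N + 1, 2N + 1 + k), so
   both sides are (-1)^N times sums of natural numbers.  On the left, expand
   C(m + k, m) = sum_j C(m, j) C(k, j), trade C(N + k, N) C(k, j) for
   C(N + k, N + j) C(N + j, N), and sum over k with the upper-index Vandermonde
   identity sum_k C(a + k, p) C(b + (q - k), r) = C(a + b + q + 1, p + r + 1). *)

Lemma bin_addn_Vandermonde m k :
  'C(m + k, m) = \sum_(j < m.+1) 'C(m, j) * 'C(k, j).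
Proof.
rewrite -binomial.Vandermonde (reindex_inj rev_ord_inj) /=.
by apply: eq_bigr => j _; rewrite subKn -1?ltnS // bin_sub // -ltnS.
Qed.

Lemma bin_addn_fact a b : 'C(a + b, a) * (a`! * b`!) = (a + b)`!.
Proof. by rewrite -(bin_fact (leq_addr b a)) addKn. Qed.

Lemma mul_bin_addn n k j :
  'C(n + k, n) * 'C(k, j) = 'C(n + k, n + j) * 'C(n + j, n).
Proof.
have [ltkj | /subnKC <-] := ltnP k j.
  by rewrite (bin_small ltkj) muln0 bin_small ?mul0n // ltn_add2l.
set i := k - j.
have fact_pos : 0 < n`! * (j`! * i`!) by rewrite !muln_gt0 !fact_gt0.
apply/eqP; rewrite -(eqn_pmul2r fact_pos); apply/eqP.
transitivity ('C(n + (j + i), n) * (n`! * ('C(j + i, j) * (j`! * i`!)))).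
  by ring.
rewrite !bin_addn_fact addnA -(bin_addn_fact (n + j) i) -(bin_addn_fact n j).
ring.
Qed.

Lemma sum_bin_hockey p q : \sum_(k < q.+1) 'C(k, p) = 'C(q.+1, p.+1).
Proof.
elim: q => [|q IHq]; first by rewrite big_ord1.
by rewrite big_ord_recr /= IHq.
Qed.

Lemma Vandermonde_upper p q r :
  \sum_(k < q.+1) 'C(k, p) * 'C(q - k, r) = 'C(q.+1, (p + r).+1).
Proof.
elim: q r => [|q IHq] r.
  by rewrite big_ord1 !bin0n; case: p r => [|p] [|r].
case: r => [|r].
  by rewrite addn0 -sum_bin_hockey; apply: eq_bigr => k _; rewrite bin0 muln1.
rewrite big_ord_recr /= subnn bin0n muln0 addn0.
under eq_bigr => k _ do rewrite subSn -1?ltnS // binS mulnDr.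
by rewrite big_split /= !IHq addnS.
Qed.

Lemma Vandermonde_upper_shift a b p q r : a <= p -> b <= r ->
  \sum_(k < q.+1) 'C(a + k, p) * 'C(b + (q - k), r)
  = 'C((a + b + q).+1, (p + r).+1).
Proof.
move=> le_ap le_br; rewrite -Vandermonde_upper.
have -> : (a + b + q).+1 = a + (q.+1 + b) by lia.
rewrite big_split_ord /= [X in _ = X + _]big1 ?add0n => [|i _]; last first.
  by rewrite bin_small ?mul0n // (leq_trans (ltn_ord i)).
rewrite big_split_ord /= [X in _ = _ + X]big1 ?addn0 => [|i _]; last first.
  by rewrite [X in _ * X]bin_small ?muln0 //; have := ltn_ord i; lia.
by apply: eq_bigr => k _; rewrite -addnA subnDl addnBA // -ltnS.
Qed.

Lemma lemma5_nat m N :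
  \sum_(k < N.+1) 'C(m + k, m) * 'C(N + k, N) * 'C(N + (N - k), N)
  = \sum_(j < m.+1) 'C(m, j) * 'C(N + j, N) * 'C((N + N + N).+1, (N + j + N).+1).
Proof.
under eq_bigr => k _ do rewrite bin_addn_Vandermonde !big_distrl /=.
rewrite exchange_big /=; apply: eq_bigr => j _.
rewrite -Vandermonde_upper_shift ?leq_addr // big_distrr /=.
apply: eq_bigr => k _.
by rewrite -(mulnA _ 'C(k, j)) (mulnC 'C(k, j)) mul_bin_addn; ring.
Qed.

Local Open Scope ring_scope.

Lemma gbinom_lt0 x z : z < 0 -> gbinom x z = 0.
Proof. by case: z. Qed.

Lemma gbinomS x k :
  gbinom x (Posz k.+1) * k.+1%:R = gbinom x (Posz k) * (x - k%:R).
Proof.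
rewrite /gbinom big_ord_recr /= factS natrM.
have kS_neq0 : k.+1%:R != 0 :> rat by rewrite pnatr_eq0.
have fact_neq0 : k`!%:R != 0 :> rat by rewrite pnatr_eq0 -lt0n fact_gt0.
by field; rewrite fact_neq0 nat1r kS_neq0.
Qed.

Lemma gbinom_nat (a k : nat) : gbinom a%:R (Posz k) = 'C(a, k)%:R.
Proof.
elim: k => [|k IHk]; first by rewrite /gbinom big_ord0 bin0 divr1.
have kS_neq0 : k.+1%:R != 0 :> rat by rewrite pnatr_eq0.
apply: (mulIf kS_neq0); rewrite gbinomS IHk -natrM mulnC mul_bin_left natrM mulrC.
have [le_ka | lt_ak] := leqP k a; first by rewrite natrB.
by rewrite bin_small // !(mulr0, mul0r, muln0, mul0n).
Qed.

Lemma gbinom_opp x k :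
  gbinom (- x) (Posz k) = (-1) ^+ k * gbinom (x + k%:R - 1) (Posz k).
Proof.
rewrite /gbinom mulrA; congr (_ / _).
transitivity (\prod_(i < k) - (x + i%:R)).
  by apply: eq_bigr => i _; rewrite opprD.
rewrite prodrN card_ord (reindex_inj rev_ord_inj) /=; congr (_ * _).
by apply: eq_bigr => i _; rewrite natrB // -addn1 natrD; ring.
Qed.

Lemma gbinom_opp_nat (a k : nat) :
  gbinom (- a.+1%:R) (Posz k) = (-1) ^+ k * 'C(a + k, a)%:R.
Proof.
rewrite gbinom_opp.
have -> : a.+1%:R + k%:R - 1 = (a + k)%:R :> rat by rewrite -natr1 natrD; ring.
by rewrite gbinom_nat -[in RHS]bin_sub ?leq_addr // addKn.
Qed.

Theorem lemma5 (m n : nat) (hn : (1 <= n)%N) :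
  \sum_(0 <= k < n)
     gbinom (m + k)%N%:R (Posz m) * gbinom (- n%:R) (Posz k)
       * gbinom (- n%:R) (n%:Z - 1 - k%:Z)
  = \sum_(0 <= k < m.+1)
     gbinom m%:R (Posz k) * gbinom (- n%:R) (Posz k)
       * gbinom (- (2 * n)%N%:R - k%:R) (n%:Z - 1 - k%:Z).
Proof.
case: n hn => [//|N] _; rewrite !big_mkord.
have index_sub k : (k <= N)%N -> N.+1%:Z - 1 - k%:Z = Posz (N - k) by lia.
have sign_sub k : (k <= N)%N -> (-1) ^+ k * (-1) ^+ (N - k) = (-1) ^+ N :> rat.
  by move=> le_kN; rewrite -exprD subnKC.
transitivity ((-1) ^+ N * (\sum_(k < N.+1)
    'C(m + k, m) * 'C(N + k, N) * 'C(N + (N - k), N))%N%:R : rat).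
  rewrite natr_sum big_distrr; apply: eq_bigr => k _.
  have le_kN : (k <= N)%N by rewrite -ltnS.
  rewrite index_sub // gbinom_nat !gbinom_opp_nat -(sign_sub k le_kN) !natrM /=.
  by ring.
rewrite lemma5_nat natr_sum big_distrr; apply: eq_bigr => k _.
have [le_kN | lt_Nk] := leqP k N.
  have -> : - (2 * N.+1)%N%:R - k%:R = - (N + k + N).+2%:R :> rat.
    by rewrite -opprD -natrD; congr (- _%:R); lia.
  rewrite index_sub // gbinom_nat !gbinom_opp_nat.
  have -> : ((N + k + N).+1 + (N - k) = (N + N + N).+1)%N by lia.
  rewrite -(sign_sub k le_kN) !natrM /=.
  by ring.
rewrite (@gbinom_lt0 _ (N.+1%:Z - 1 - k%:Z)) ?mulr0; last by lia.
by rewrite (@bin_small (N + N + N).+1) ?muln0 /= ?mulr0 //; lia.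
Qed.
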